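(* Assume the setting and hypotheses of Theorem 1 (regular pure-feedback subsystems, lower-triangular coupling $\Delta$). Let $\mathcal{X}$ be the open neighborhood of the operating point on which the joint system is flat with flat output $\mathbf{y}=(\mathbf{y}^1,\dots,\mathbf{y}^N)$, where $\mathbf{y}^i=\mathbf{x}^i_1$. Suppose that for each $i$ smooth maps $h^i_k$, $k=1,\dots,r$, are given such that for all $(\mathbf{x},\mathbf{u})\in\mathcal{X}$: $$h^i_k\big(\mathbf{x}^i_1,\dots,\mathbf{x}^i_k,\bar f^i_k(\mathbf{x}^i_1,\dots,\mathbf{x}^i_{k+1})\big)=\mathbf{x}^i_{k+1}\quad (k=1,\dots,r-1),$$ $$h^i_r\big(\mathbf{x}^i_1,\dots,\mathbf{x}^i_r,\bar f^i_r(\mathbf{x}^i_1,\dots,\mathbf{x}^i_r,\mathbf{u}^i)\big)=\mathbf{u}^i.$$ Define maps recursively for $i=1,\dots,N$ by $\Phi^i_1(\mathbf{y})=\mathbf{y}^i$. For $k=2,\dots,r+1$, set $$\Phi^i_k(\mathbf{y},\dots,\mathbf{y}^{(k-1)})=h^i_{k-1}\Big(\Phi^i_1,\dots,\Phi^i_{k-1},\; D\Phi^i_{k-1}\,[\dot{\mathbf{y}};\dots;\mathbf{y}^{(k-1)}]-\Delta^i_{k-1}\big(\Phi_1,\dots,\Phi_{k-1},\Phi^1_k,\dots,\Phi^{i-1}_k\big)\Big).$$ Here $\Phi_s=(\Phi^1_s,\dots,\Phi^N_s)$. The term $D\Phi^i_{k-1}[\dot{\mathbf{y}};\dots;\mathbf{y}^{(k-1)}]$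 is the full Jacobian of $\Phi^i_{k-1}$ with respect to its arguments $(\mathbf{y},\dots,\mathbf{y}^{(k-2)})$, applied to $(\dot{\mathbf{y}},\dots,\mathbf{y}^{(k-1)})$; that is, it is the total time derivative of $\Phi^i_{k-1}$. The recursion is well defined when carried out in increasing order of $(k-1)N+i$, and the second argument of $\Delta^i_{k-1}$ is the substitution $\mathbf{x}_{\le k-1}\mapsto(\Phi_1,\dots,\Phi_{k-1})$, $\mathbf{x}^{<i}_k\mapsto(\Phi^1_k,\dots,\Phi^{i-1}_k)$ in the lower-triangular form $\bar\Delta^i_{k-1}$. Then each $\Phi^i_k$ is smooth. Moreover, along any trajectory of the coupled joint dynamics $\dot{\mathbf{x}}=\bar f(\mathbf{x},\mathbf{u})+\Delta(\mathbf{x})$ that stays in $\mathcal{X}$, we have, for all $i=1,\dots,N$ and $k=1,\dots,r$, $$\mathbf{x}^i_k=\Phi^i_k(\mathbf{y},\dots,\mathbf{y}^{(k-1)}),\qquad \mathbf{u}^i=\Phi^i_{r+1}(\mathbf{y},\dots,\mathbf{y}^{(r)}).$$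
   Context: Setup. There are $N$ subsystems. Subsystem $i$ has input $\mathbf{u}^i\in\mathbb{R}^{m_i}$ and state $\mathbf{x}^i=(\mathbf{x}^i_1,\dots,\mathbf{x}^i_r)\in\mathbb{R}^{rm_i}$ with $\mathbf{x}^i_j\in\mathbb{R}^{m_i}$. The joint state is $\mathbf{x}=(\mathbf{x}^1,\dots,\mathbf{x}^N)$ and the joint input is $\mathbf{u}=(\mathbf{u}^1,\dots,\mathbf{u}^N)$. Write $\mathbf{x}_j=(\mathbf{x}^1_j,\dots,\mathbf{x}^N_j)$, $\mathbf{x}_{\le j}=(\mathbf{x}_1,\dots,\mathbf{x}_j)$, and $\mathbf{x}^{<i}_{j+1}=(\mathbf{x}^1_{j+1},\dots,\mathbf{x}^{i-1}_{j+1})$. Coupled dynamics: $\dot{\mathbf{x}}^i_j=\bar f^i_j(\mathbf{x}^i_1,\dots,\mathbf{x}^i_{j+1})+\Delta^i_j(\mathbf{x})$ for $j<r$, and $\dot{\mathbf{x}}^i_r=\bar f^i_r(\mathbf{x}^i_1,\dots,\mathbf{x}^i_r,\mathbf{u}^i)+\Delta^i_r(\mathbf{x})$. Regularity. Each $\bar f^i_j$ is smooth near the operating point $(\mathbf{x}^*,\mathbf{u}^* )$, and at that point $\det D_{\mathbf{x}^i_{j+1}}\bar f^i_j\ne0$ for $j<r$ and $\det D_{\mathbf{u}^i}\bar f^i_r\ne0$. Lower-triangular coupling on $\mathcal{X}$. Each $\Delta^i_j$ is smooth and $\Delta^i_j(\mathbf{x})=\bar\Delta^i_j(\mathbf{x}_{\le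 j},\mathbf{x}^{<i}_{j+1})$ on $\mathcal{X}$. *)

From HB Require Import structures.
From mathcomp Require Import all_boot all_order all_algebra.
From mathcomp Require Import all_classical all_reals all_analysis.
Set Implicit Arguments. Unset Strict Implicit. Unset Printing Implicit Defensive.
Import Order.TTheory GRing.Theory Num.Theory.
Import numFieldNormedType.Exports.
Local Open Scope classical_set_scope.
Local Open Scope ring_scope.

Fixpoint Cn_on {R : realType} {V W : normedModType R} (A : set V) (n : nat)
    (f : V -> W) : Prop :=
  match n with
  | 0 => forall x, A x -> {for x, continuous f}
  | n'.+1 => (forall x, A x -> differentiable f x) /\
             (forall v : V, Cn_on A n' (fun x => 'd f x v))
  end.

Definition smooth_on {R : realType} {V W : normedModType R} (A : set V)
  (f : V -> W) : Prop := forall n, Cn_on A n f.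

Definition smooth {R : realType} {V W : normedModType R} (f : V -> W) : Prop :=
  smooth_on setT f.

Definition firstrows {T : Type} {n p : nat} (q : nat) (A : 'M[T]_(n.+1, p))
  : 'M[T]_(q, p) := \matrix_(a < q, b < p) A (inord a) b.

Definition lastrows {T : Type} {n p : nat} (A : 'M[T]_(n.+2, p))
  : 'M[T]_(n.+1, p) := \matrix_(a < n.+1, b < p) A (inord a.+1) b.

Definition snoc {T : Type} {n p : nat} (A : 'M[T]_(n.+1, p)) (v : 'rV[T]_p)
  : 'M[T]_(n.+2, p) :=
  \matrix_(s < n.+2, c < p) (if (s <= n)%N then A (inord s) c else v ord0 c).

(* keep only the blocks l < i of a joint row vector (the others are set to 0):
   this encodes the argument x^{<i}_{j+1} of the lower-triangular form *)
Definition lowmask {R : realType} {N : nat} {m : 'I_N -> nat} (i : 'I_N)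
  (v : 'rV[R]_(\sum_(l < N) m l)) : 'rV[R]_(\sum_(l < N) m l) :=
  \mxrow_(l < N) (if (l < i)%N then submxrow v l else 0).

Section PhiDef.
Variables (R : realType) (N : nat) (m : 'I_N -> nat).
Local Notation M := (\sum_(l < N) m l)%N.
(* h i k : (x^i_1, ..., x^i_{k+1}, w) |-> h^i_{k+1}(...)   (0-based k) *)
Variable h : forall (i : 'I_N) (k : nat), 'M[R]_(k.+2, m i) -> 'rV[R]_(m i).
(* Dbar i k : (x_1, ..., x_{k+1}, masked x_{k+2}) |-> Dbar^i_{k+1}(...) *)
Variable Dbar : forall (i : 'I_N) (k : nat), 'M[R]_(k.+2, M) -> 'rV[R]_(m i).

(* Given F = (Phi_1, ..., Phi_{k+1}) (stacked as rows, F : jets of length k+1),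
   compute the row Phi_{k+2} = (Phi^1_{k+2}, ..., Phi^N_{k+2}) at the jet
   Y = (y, y', ..., y^(k+1)), block by block in increasing i. *)
Definition newrow (k : nat) (F : 'M[R]_(k.+1, M) -> 'M[R]_(k.+1, M))
    (Y : 'M[R]_(k.+2, M)) : 'rV[R]_M :=
  let Yp := firstrows k.+1 Y in
  let P := F Yp in
  let dterm (l : 'I_N) : 'rV[R]_(m l) :=
    'd (fun Z => submxrow (row ord_max (F Z)) l) Yp (lastrows Y) in
  let fix acc (n : nat) : 'rV[R]_M :=
    match n with
    | 0 => 0
    | n'.+1 =>
      let prev := acc n' in
      \mxrow_(l < N)
        (if (l == n' :> nat)
         then @h l k (snoc (submxrow P l) (dterm l - @Dbar l k (snoc P prev)))
         else submxrow prev l)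
    end in
  acc N.

(* PhiM k Y = rows (Phi_1, ..., Phi_{k+1}) evaluated at Y = (y, ..., y^(k)) *)
Fixpoint PhiM (k : nat) : 'M[R]_(k.+1, M) -> 'M[R]_(k.+1, M) :=
  match k return 'M[R]_(k.+1, M) -> 'M[R]_(k.+1, M) with
  | 0 => fun Y => Y
  | k'.+1 => fun Y => snoc (@PhiM k' (firstrows k'.+1 Y)) (@newrow k' (@PhiM k') Y)
  end.

(* Phi i k = Phi^i_{k+1} (paper's indexing), a map of (y, ..., y^(k)) *)
Definition Phi (i : 'I_N) (k : nat) (Y : 'M[R]_(k.+1, M)) : 'rV[R]_(m i) :=
  submxrow (row ord_max (@PhiM k Y)) i.
End PhiDef.
Arguments Phi {R N m} h Dbar i k Y.

Definition jet {R : realType} {p : nat} (y : R -> 'rV[R]_p) (k : nat) (t : R)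
  : 'M[R]_(k.+1, p) := \matrix_(s < k.+1, c < p) (derive1n s y t) ord0 c.

From HB Require Import structures.
From mathcomp Require Import all_boot all_order all_algebra.
From mathcomp Require Import all_classical all_reals all_analysis.
From mathcomp Require Import zify.
Import Order.TTheory GRing.Theory Num.Theory.
Import numFieldNormedType.Exports.
Local Open Scope classical_set_scope.
Local Open Scope ring_scope.
Set Implicit Arguments. Unset Strict Implicit. Unset Printing Implicit Defensive.

(* Each [Phi^i_k] is built from the smooth maps [h] and [Dbar] by composition,
   stacking of rows, and the total derivative [Y |-> 'd F (Y_0..Y_k) (Y_1..Y_(k+1))]
   of a previous [Phi]; all of these preserve C^oo, the last one because the
   derivatives of a C^(n+1) map are C^n.  If [Phi_1, ..., Phi_k]
   reproduce [x_1, ..., x_k] from the jet of [y], then the total derivative of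
   [Phi^i_k] is [dx^i_k/dt = fbar^i_k + Delta^i_k].  By lower-triangularity,
   [Delta^i_k] only involves [x_(<=k)] and the blocks [x^(<i)_(k+1)] that are
   already recovered, so subtracting it and applying the left inverse [h^i_k]
   yields [x^i_(k+1)].  The jet of [y] exists because [y^(s)] is a smooth function
   of [x_1, ..., x_(s+1)] (an iterated Lie derivative of [x_1]), which can be
   differentiated once more along the trajectory. *)

Section SmoothCalculus.
Variable R : realType.
Implicit Types (V W U : normedModType R).

Lemma near_eq_diff V W (f g : V -> W) x :
  (\forall y \near x, f y = g y) -> differentiable f x ->
  differentiable g x /\ 'd g x = 'd f x :> (V -> W).
Proof.
move=> fg df.
have fgx : f x = g x := nbhs_singleton fg.
have dg : g \o shift x = cst (g x) + 'd f x +o_ 0 id.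
  apply/eqaddoP => _/posnumP[e].
  have /eqaddoP /(_ e%:num) df_small := diff_locally df.
  have fg0 : \forall y \near (0 : V), f (y + x) = g (y + x).
    rewrite (near_shift x) /=; near=> y; rewrite /comp /= sub0r subrK.
    by near: y; exact: fg.
  near=> y; have fgy : f (y + x) = g (y + x) by near: y.
  suff -> : (g \o shift x - (cst (g x) + 'd f x)) y =
            (f \o shift x - (cst (f x) + 'd f x)) y by near: y; exact: df_small.
  by rewrite !fctE /shift fgx fgy.
have dfE : 'd g x = 'd f x :> (V -> W).
  by apply: diff_unique => //; exact: diff_continuous.
by split=> //; apply/diff_locallyP; rewrite dfE; split=> //; exact: diff_continuous.
Unshelve. all: by end_near. Qed.

Lemma Cn_on_subset V W (A B : set V) n (f : V -> W) :
  A `<=` B -> Cn_on B n f -> Cn_on A n f.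
Proof.
move=> AB; elim: n f => [|n IH] f /=; first by move=> H x /AB; apply: H.
by move=> [df Hdf]; split=> [x /AB|v]; [exact: df|exact: IH].
Qed.

Lemma Cn_onW V W (A : set V) n (f : V -> W) : Cn_on A n.+1 f -> Cn_on A n f.
Proof.
elim: n f => [|n IH] f /=; first by move=> [df _] x /df /differentiable_continuous.
by move=> [df Hdf]; split=> // v; exact: IH.
Qed.

Lemma eq_Cn_on V W (A : set V) n (f g : V -> W) :
  f =1 g -> Cn_on A n g -> Cn_on A n f.
Proof. by move=> /funext ->. Qed.

Lemma Cn_on_eq V W (A : set V) n (f g : V -> W) : open A ->
  (forall x, A x -> f x = g x) -> Cn_on A n f -> Cn_on A n g.
Proof.
move=> oA; have near_eq (f' g' : V -> W) x : (forall x, A x -> f' x = g' x) ->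
    A x -> \forall y \near x, f' y = g' y.
  by move=> fg Ax; apply: filterS (open_nbhs_nbhs (conj oA Ax)) => y /fg.
elim: n f g => [|n IH] f g fg /=.
  move=> cf x Ax; apply: cvg_trans (near_eq_cvg (near_eq _ _ x fg Ax)) _.
  by rewrite -(fg x Ax); exact: cf.
move=> [df Hdf]; split=> [x Ax|v].
  exact: (near_eq_diff (near_eq _ _ x fg Ax) (df x Ax)).1.
apply: (IH (fun y => 'd f y v)) (Hdf v) => x Ax.
by rewrite (near_eq_diff (near_eq _ _ x fg Ax) (df x Ax)).2.
Qed.

Lemma Cn_on_cst V W (A : set V) n (c : W) : Cn_on A n (cst c).
Proof.
elim: n c => [|n IH] c /=; first by move=> x _; exact: cst_continuous.
split=> [x _|v]; first exact: differentiable_cst.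
by apply: (eq_Cn_on (g := cst (0 : W))) (IH 0) => x; rewrite diff_cst.
Qed.

Lemma diff_of_linear V W (f : V -> W) : linear f -> continuous f ->
  (forall x, differentiable f x) /\ (forall x, 'd f x = f :> (V -> W)).
Proof.
move=> lf cf; pose fL : {linear V -> W} := HB.pack f (GRing.isLinear.Build _ _ _ _ _ lf).
by split=> x; [exact: (@linear_differentiable _ _ _ fL)|exact: (@diff_lin _ _ _ fL)].
Qed.

Lemma Cn_on_linear V W (A : set V) n (f : V -> W) :
  linear f -> continuous f -> Cn_on A n f.
Proof.
move=> lf cf; have [df dfE] := diff_of_linear lf cf.
case: n => [|n] /=; first by move=> x _; exact: cf.
split=> [x _|v]; first exact: df.
by apply: (eq_Cn_on (g := cst (f v))) (Cn_on_cst _ _ _) => x; rewrite dfE.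
Qed.

Lemma Cn_on_id V (A : set V) n : Cn_on A n id.
Proof. by apply: Cn_on_linear => // x; exact: cvg_id. Qed.

Lemma Cn_on_comp_linear_l V W U (A : set V) n (L : W -> U) (g : V -> W) :
  open A -> linear L -> continuous L -> Cn_on A n g -> Cn_on A n (L \o g).
Proof.
move=> oA lL cL; have [dL dLE] := diff_of_linear lL cL.
elim: n g => [|n IH] g /=.
  by move=> cg x Ax; apply: continuous_comp (cg x Ax) (cL _).
move=> [dg Hdg]; split=> [x Ax|v]; first exact: differentiable_comp (dg x Ax) (dL _).
apply: (Cn_on_eq (f := L \o (fun y => 'd g y v))) (IH _ (Hdg v)) => // x Ax.
by rewrite diff_comp ?dLE //; exact: dg.
Qed.

Lemma Cn_on_comp_linear_r V W U (A : set V) n (P : V -> W) (f : W -> U) :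
  open A -> linear P -> continuous P -> Cn_on (P @` A) n f -> Cn_on A n (f \o P).
Proof.
move=> oA lP cP; have [dP dPE] := diff_of_linear lP cP.
elim: n f => [|n IH] f /=.
  by move=> cf x Ax; apply: continuous_comp (cP _) _; apply: cf; exists x.
move=> [df Hdf]; split=> [x Ax|v].
  by apply: differentiable_comp (dP x) _; apply: df; exists x.
apply: (Cn_on_eq (f := (fun y => 'd f y (P v)) \o P)) (IH _ (Hdf _)) => // x Ax.
by rewrite diff_comp /= ?dPE //; apply: df; exists x.
Qed.

Lemma Cn_onD V W (A : set V) n (f g : V -> W) : open A ->
  Cn_on A n f -> Cn_on A n g -> Cn_on A n (fun x => f x + g x).
Proof.
move=> oA; change (Cn_on A n f -> Cn_on A n g -> Cn_on A n (f + g)).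
elim: n f g => [|n IH] f g /=.
  by move=> cf cg x Ax; apply: cvgD; [exact: cf|exact: cg].
move=> [df Hdf] [dg Hdg]; split=> [x Ax|v].
  exact: differentiableD (df x Ax) (dg x Ax).
apply: (Cn_on_eq (f := (fun y => 'd f y v) + (fun y => 'd g y v)))
  (IH _ _ (Hdf v) (Hdg v)) => // x Ax.
by rewrite (diffD (df x Ax) (dg x Ax)).
Qed.

Lemma Cn_onN V W (A : set V) n (f : V -> W) : open A ->
  Cn_on A n f -> Cn_on A n (fun x => - f x).
Proof.
move=> oA; apply: (Cn_on_comp_linear_l (L := -%R)) => //; last exact: oppr_continuous.
by move=> k u v; rewrite opprD scalerN.
Qed.

Lemma Cn_onB V W (A : set V) n (f g : V -> W) : open A ->
  Cn_on A n f -> Cn_on A n g -> Cn_on A n (fun x => f x - g x).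
Proof. by move=> oA Hf Hg; apply: Cn_onD => //; exact: Cn_onN. Qed.

Lemma Cn_on_sum V W (A : set V) n k (F : 'I_k -> V -> W) : open A ->
  (forall i, Cn_on A n (F i)) -> Cn_on A n (fun x => \sum_(i < k) F i x).
Proof.
move=> oA; elim: k F => [|k IH] F HF.
  by apply: (eq_Cn_on (g := cst (0 : W))) (Cn_on_cst _ _ _) => x; rewrite big_ord0.
apply: (eq_Cn_on (g := fun x => \sum_(i < k) F (widen_ord (leqnSn k) i) x + F ord_max x)).
  by move=> x; rewrite big_ord_recr.
by apply: Cn_onD => //; exact: IH.
Qed.

Lemma Cn_onM V (A : set V) n (f g : V -> R) : open A ->
  Cn_on A n f -> Cn_on A n g -> Cn_on A n (fun x => f x * g x).
Proof.
move=> oA; change (Cn_on A n f -> Cn_on A n g -> Cn_on A n (f * g)).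
elim: n f g => [|n IH] f g /=.
  by move=> cf cg x Ax; apply: cvgM; [exact: cf|exact: cg].
move=> [df Hdf] [dg Hdg]; split=> [x Ax|v].
  exact: differentiableM (df x Ax) (dg x Ax).
apply: (Cn_on_eq (f := f * (fun y => 'd g y v) + g * (fun y => 'd f y v))) => //.
  by move=> x Ax; rewrite [in RHS](diffM (df x Ax) (dg x Ax)).
by apply: Cn_onD => //; apply: IH => //; apply: Cn_onW; split.
Qed.

Lemma Cn_on_entry V p q (A : set V) n (F : V -> 'M[R]_(p, q)) i j : open A ->
  Cn_on A n F -> Cn_on A n (fun x => F x i j).
Proof.
move=> oA; apply: (Cn_on_comp_linear_l (L := fun M : 'M[R]_(p, q) => M i j)) => //.
  by move=> k M M'; rewrite !mxE.
exact: coord_continuous.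
Qed.

Lemma Cn_on_mx V p q (A : set V) n (F : V -> 'M[R]_(p, q)) : open A ->
  (forall i j, Cn_on A n (fun x => F x i j)) -> Cn_on A n F.
Proof.
move=> oA HF.
apply: (eq_Cn_on (g := fun x => \sum_(i < p) \sum_(j < q) F x i j *: delta_mx i j)).
  by move=> x; rewrite -matrix_sum_delta.
apply: Cn_on_sum => // i; apply: Cn_on_sum => // j.
apply: (Cn_on_comp_linear_l (L := fun r : R => r *: delta_mx i j)) (HF i j) => //.
  by move=> k u v; rewrite scalerDl scalerA.
exact: scalel_continuous.
Qed.

(* Coordinates in the canonical basis reduce the question to products of scalars. *)
Lemma Cn_on_apply_linear V p q p' q' (A : set V) n
    (L : V -> {linear 'M[R]_(p, q) -> 'M[R]_(p', q')}) (b : V -> 'M[R]_(p, q)) :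
  open A -> (forall u, Cn_on A n (fun x => L x u)) -> Cn_on A n b ->
  Cn_on A n (fun x => L x (b x)).
Proof.
move=> oA HL Hb; apply: Cn_on_mx => // s c.
apply: (eq_Cn_on (g := fun x =>
  \sum_(i < p) \sum_(j < q) b x i j * L x (delta_mx i j) s c)).
  move=> x; rewrite {1}(matrix_sum_delta (b x)) linear_sum summxE.
  apply: eq_bigr => i _; rewrite linear_sum summxE.
  by apply: eq_bigr => j _; rewrite linearZ !mxE.
do 2![apply: Cn_on_sum => // ?].
by apply: Cn_onM => //; exact: Cn_on_entry.
Qed.

Lemma Cn_on_comp V p q p' q' (A : set V) (B : set 'M[R]_(p, q)) n
    (f : 'M[R]_(p, q) -> 'M[R]_(p', q')) (g : V -> 'M[R]_(p, q)) :
  open A -> (forall x, A x -> B (g x)) ->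
  Cn_on B n f -> Cn_on A n g -> Cn_on A n (f \o g).
Proof.
move=> oA gAB; elim: n p' q' f => [|n IH] p' q' f /= Hf Hg.
  by move=> x Ax; apply: continuous_comp (Hg x Ax) (Hf _ (gAB x Ax)).
have [[df Hdf] [dg Hdg]] := (Hf, Hg).
split=> [x Ax|v]; first exact: differentiable_comp (dg x Ax) (df _ (gAB x Ax)).
apply: (Cn_on_eq (f := fun x => 'd f (g x) ('d g x v))) => //.
  by move=> x Ax; rewrite (diff_comp (dg x Ax) (df _ (gAB x Ax))).
apply: (Cn_on_apply_linear (L := fun x => 'd f (g x))) (Hdg v) => // u.
exact: (IH _ _ (fun y => 'd f y u)) (Hdf u) (Cn_onW Hg).
Qed.

Lemma Cn_on_diff_apply V p q p' q' (A : set V) (B : set 'M[R]_(p, q)) n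
    (G : 'M[R]_(p, q) -> 'M[R]_(p', q')) (a b : V -> 'M[R]_(p, q)) :
  open A -> (forall x, A x -> B (a x)) ->
  Cn_on B n.+1 G -> Cn_on A n a -> Cn_on A n b ->
  Cn_on A n (fun x => 'd G (a x) (b x)).
Proof.
move=> oA aAB [_ HdG] Ha Hb.
apply: (Cn_on_apply_linear (L := fun x => 'd G (a x))) Hb => // u.
exact: (Cn_on_comp (f := fun y => 'd G y u)) (HdG u) Ha.
Qed.

Lemma smooth_comp V p q p' q' (f : 'M[R]_(p, q) -> 'M[R]_(p', q'))
    (g : V -> 'M[R]_(p, q)) :
  smooth f -> smooth g -> smooth (f \o g).
Proof. by move=> Hf Hg n; exact: (Cn_on_comp openT (fun _ _ => I) (Hf n) (Hg n)). Qed.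

End SmoothCalculus.

Section SmoothRowOperations.
Variables (R : realType) (V : normedModType R) (A : set V) (n : nat).
Hypothesis oA : open A.

Lemma Cn_on_snoc k p (F : V -> 'M[R]_(k.+1, p)) (G : V -> 'rV[R]_p) :
  Cn_on A n F -> Cn_on A n G -> Cn_on A n (fun x => snoc (F x) (G x)).
Proof.
move=> HF HG; apply: Cn_on_mx => // s c.
apply: (eq_Cn_on (g := fun x => if (s <= k)%N then F x (inord s) c else G x ord0 c)).
  by move=> x; rewrite mxE.
by case: (s <= k)%N; exact: Cn_on_entry.
Qed.

Lemma Cn_on_firstrows k p q (F : V -> 'M[R]_(k.+1, p)) :
  Cn_on A n F -> Cn_on A n (fun x => firstrows q (F x)).
Proof.
move=> HF; apply: Cn_on_mx => // s c.
apply: (eq_Cn_on (g := fun x => F x (inord s) c)) (Cn_on_entry _ _ oA HF).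
by move=> x; rewrite mxE.
Qed.

Lemma Cn_on_lastrows k p (F : V -> 'M[R]_(k.+2, p)) :
  Cn_on A n F -> Cn_on A n (fun x => lastrows (F x)).
Proof.
move=> HF; apply: Cn_on_mx => // s c.
apply: (eq_Cn_on (g := fun x => F x (inord s.+1) c)) (Cn_on_entry _ _ oA HF).
by move=> x; rewrite mxE.
Qed.

Lemma Cn_on_row p q (F : V -> 'M[R]_(p, q)) i :
  Cn_on A n F -> Cn_on A n (fun x => row i (F x)).
Proof.
move=> HF; apply: Cn_on_mx => // s c.
apply: (eq_Cn_on (g := fun x => F x i c)) (Cn_on_entry _ _ oA HF).
by move=> x; rewrite mxE.
Qed.

Lemma Cn_on_submxrow N (m : 'I_N -> nat) p (F : V -> 'M[R]_(p, \sum_(l < N) m l)) l :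
  Cn_on A n F -> Cn_on A n (fun x => submxrow (F x) l).
Proof.
move=> HF; apply: Cn_on_mx => // s c.
apply: (eq_Cn_on (g := fun x => F x s (tagnat.Rank l c))) (Cn_on_entry _ _ oA HF).
by move=> x; rewrite mxE.
Qed.

Lemma Cn_on_mxrow N (m : 'I_N -> nat) p (B : forall l : 'I_N, V -> 'M[R]_(p, m l)) :
  (forall l, Cn_on A n (B l)) -> Cn_on A n (fun x => \mxrow_(l < N) B l x).
Proof.
move=> HB; apply: Cn_on_mx => // s c.
apply: (eq_Cn_on (g := fun x => B (tagnat.sig1 c) x s (tagnat.sig2 c)))
  (Cn_on_entry _ _ oA (HB _)).
by move=> x; rewrite mxE.
Qed.

Lemma Cn_on_lowmask N (m : 'I_N -> nat) (F : V -> 'rV[R]_(\sum_(l < N) m l)) i :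
  Cn_on A n F -> Cn_on A n (fun x => lowmask i (F x)).
Proof.
move=> HF.
apply: (Cn_on_mxrow (B := fun l x => if (l < i)%N then submxrow (F x) l else 0)) => l.
by case: (l < i)%N; [exact: Cn_on_submxrow|exact: Cn_on_cst].
Qed.

End SmoothRowOperations.

Lemma open_image_of_sections (T U : topologicalType) (P : T -> U) (X : set T) :
  open X ->
  (forall x, X x -> exists2 s : U -> T, continuous s & s (P x) = x /\ cancel s P) ->
  open (P @` X).
Proof.
move=> oX sec; rewrite openE => _ [x Xx <-].
have [s cs [sPx sK]] := sec x Xx.
have : \forall w \near P x, X (s w).
  by apply: (cs (P x)); rewrite sPx; exact: open_nbhs_nbhs.
by apply: filterS => w Xsw; exists (s w).
Qed.

Section Rows.
Variable R : realType.

Lemma firstrows_firstrows n p q q' (A : 'M[R]_(n.+1, p)) :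
  (q <= q'.+1 <= n.+1)%N -> firstrows q (firstrows q'.+1 A) = firstrows q A.
Proof.
move=> /andP[qq' q'n]; apply/matrixP => i c; rewrite !mxE; congr (A _ c).
by apply/val_inj; rewrite /= !inordK //; move: (ltn_ord i); lia.
Qed.

Lemma submxrow_firstrows n N (m : 'I_N -> nat) q
    (A : 'M[R]_(n.+1, \sum_(l < N) m l)) l :
  submxrow (firstrows q A) l = firstrows q (submxrow A l).
Proof. by apply/matrixP => i c; rewrite !mxE. Qed.

Lemma row_firstrows n p q (A : 'M[R]_(n.+1, p)) i :
  (i <= q <= n)%N -> row (inord i) (firstrows q.+1 A) = row (inord i) A.
Proof.
move=> /andP[iq qn]; apply/rowP => c; rewrite !mxE; congr (A _ c).
by apply/val_inj; rewrite /= !inordK //; lia.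
Qed.

Lemma snoc_firstrows_row n p q (A : 'M[R]_(n.+1, p)) :
  (q < n)%N -> snoc (firstrows q.+1 A) (row (inord q.+1) A) = firstrows q.+2 A.
Proof.
move=> qn; apply/matrixP => i c; rewrite !mxE.
by case: ifP => iq; congr (A _ c); apply/val_inj; rewrite /= !inordK //;
  move: (ltn_ord i) iq; lia.
Qed.

Lemma open_firstrows n p q (X : set 'M[R]_(n.+1, p)) :
  (q <= n)%N -> open X -> open [set firstrows q.+1 z | z in X].
Proof.
move=> qn oX; apply: open_image_of_sections => // z0 _.
pose s := fun w : 'M[R]_(q.+1, p) =>
  \matrix_(i < n.+1, c < p) if (i <= q)%N then w (inord i) c else z0 i c.
exists s; last split.
- have : Cn_on setT 0 s.
    apply: Cn_on_mx; first exact: openT.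
    move=> i c; apply: (eq_Cn_on (g := fun w : 'M[R]_(q.+1, p) =>
      if (i <= q)%N then w (inord i) c else z0 i c)) => [w|]; first by rewrite mxE.
    by case: (i <= q)%N; [apply: Cn_on_entry (Cn_on_id _ _); exact: openT|exact: Cn_on_cst].
  by move=> Cs w; exact: Cs.
- apply/matrixP => i c; rewrite !mxE; case: ifP => // iq.
  by congr (z0 _ c); apply/val_inj; rewrite /= !inordK //; move: (ltn_ord i) iq; lia.
- move=> w; apply/matrixP => i c; rewrite !mxE inordK; last by move: (ltn_ord i); lia.
  rewrite -ltnS ltn_ord; congr (w _ c); exact: inord_val.
Qed.

Lemma firstrows_jet p (y : R -> 'rV[R]_p) k t :
  firstrows k.+1 (jet y k.+1 t) = jet y k t.
Proof. by apply/matrixP => s c; rewrite !mxE inordK //; move: (ltn_ord s); lia. Qed.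

Lemma derive_jet p (y : R -> 'rV[R]_p) k t :
  (forall s, (s <= k)%N -> derivable (derive1n s y) t 1) ->
  derivable (jet y k) t 1 /\ 'D_1 (jet y k) t = lastrows (jet y k.+1 t).
Proof.
move=> dy.
have jetE (s : 'I_k.+1) c : (fun u => jet y k u s c) = (fun u => derive1n s y u 0 c).
  by apply: funext => u; rewrite mxE.
have dj : derivable (jet y k) t 1.
  apply/derivable_mxP => s c; rewrite jetE.
  by move/derivable_mxP: (dy s (ltn_ord s)); apply.
split=> //; rewrite derive_mx //; apply/matrixP => s c.
rewrite [LHS]mxE jetE !mxE inordK; last by move: (ltn_ord s); lia.
by rewrite derive1nS derive1E (derive_mx (dy s (ltn_ord s))) mxE.
Qed.

Lemma derive_comp_jet (W : normedModType R) p (y : R -> 'rV[R]_p) k t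
    (G : 'M[R]_(k.+1, p) -> W) :
  (forall s, (s <= k)%N -> derivable (derive1n s y) t 1) ->
  differentiable G (jet y k t) ->
  'D_1 (G \o jet y k) t = 'd G (jet y k t) (lastrows (jet y k.+1 t)).
Proof.
move=> dy dG; have [/derivable1_diffP dj <-] := derive_jet dy.
rewrite deriveE; last exact: differentiable_comp.
by rewrite diff_comp // [in RHS]deriveE.
Qed.

End Rows.

Section SmoothPhi.
Variables (R : realType) (N : nat) (m : 'I_N -> nat).
Local Notation M := (\sum_(l < N) m l)%N.
Variable h : forall (i : 'I_N) (k : nat), 'M[R]_(k.+2, m i) -> 'rV[R]_(m i).
Variable Dbar : forall (i : 'I_N) (k : nat), 'M[R]_(k.+2, M) -> 'rV[R]_(m i).
#[local] Hint Resolve openT : core.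

(* The local fixpoint of [newrow]: the blocks [l < n] of the new row are
   computed, the others are [0]. *)
Definition newrow_upto (k : nat) (P : 'M[R]_(k.+1, M))
    (dt : forall l : 'I_N, 'rV[R]_(m l)) :=
  fix acc (n : nat) : 'rV[R]_M :=
    match n with
    | 0 => 0
    | n'.+1 =>
      let prev := acc n' in
      \mxrow_(l < N)
        (if (l == n' :> nat)
         then @h l k (snoc (submxrow P l) (dt l - @Dbar l k (snoc P prev)))
         else submxrow prev l)
    end.

Lemma newrowE k (F : 'M[R]_(k.+1, M) -> 'M[R]_(k.+1, M)) Y :
  newrow h Dbar F Y = newrow_upto (F (firstrows k.+1 Y))
    (fun l => 'd (fun Z => submxrow (row ord_max (F Z)) l)
                 (firstrows k.+1 Y) (lastrows Y)) N.
Proof. by []. Qed.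

Lemma smooth_newrow_upto k (V : normedModType R) (P : V -> 'M[R]_(k.+1, M))
    (dt : forall l : 'I_N, V -> 'rV[R]_(m l)) :
  (forall l, smooth (@h l k)) -> (forall l, smooth (@Dbar l k)) ->
  smooth P -> (forall l, smooth (dt l)) ->
  forall n, smooth (fun x => newrow_upto (P x) (fun l => dt l x) n).
Proof.
move=> Hh HD HP Hdt; elim=> [|n IH] d /=; first exact: Cn_on_cst.
apply: Cn_on_mxrow => // l; case: (l == n :> nat); last exact: Cn_on_submxrow.
apply: (Cn_on_comp openT (fun _ _ => I) (Hh l d)).
apply: Cn_on_snoc => //; first exact: Cn_on_submxrow.
apply: Cn_onB => //; first exact: Hdt.
apply: (Cn_on_comp openT (fun _ _ => I) (HD l d)).
exact: Cn_on_snoc.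
Qed.

Lemma smooth_PhiM k :
  (forall l k', (k' < k)%N -> smooth (@h l k')) ->
  (forall l k', (k' < k)%N -> smooth (@Dbar l k')) ->
  smooth (PhiM h Dbar (k := k)).
Proof.
elim: k => [|k IH] Hh HD d; first exact: Cn_on_id.
have {}IH : smooth (PhiM h Dbar (k := k)).
  by apply: IH => l k' lt; [apply: Hh|apply: HD]; exact: ltn_trans lt _.
have Hfirst : smooth (fun Y : 'M[R]_(k.+2, M) => firstrows k.+1 Y).
  by move=> d'; apply: Cn_on_firstrows => //; exact: Cn_on_id.
change (Cn_on setT d (fun Y => snoc (PhiM h Dbar (firstrows k.+1 Y))
                                   (newrow h Dbar (PhiM h Dbar (k := k)) Y))).
apply: Cn_on_snoc => //; first exact: smooth_comp IH Hfirst d.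
apply: (eq_Cn_on (g := fun Y => newrow_upto (PhiM h Dbar (firstrows k.+1 Y))
    (fun l => 'd (fun Z => submxrow (row ord_max (PhiM h Dbar (k := k) Z)) l)
                 (firstrows k.+1 Y) (lastrows Y)) N)) => [Y|]; first exact: newrowE.
apply: smooth_newrow_upto => [l|l|d'|l d'].
- exact: Hh.
- exact: HD.
- exact: smooth_comp IH Hfirst d'.
apply: (Cn_on_diff_apply openT (fun _ _ => I) _ (Hfirst d')).
  apply: Cn_on_submxrow; first exact: openT.
  by apply: Cn_on_row; [exact: openT|exact: IH].
by apply: Cn_on_lastrows; [exact: openT|exact: Cn_on_id].
Qed.

Lemma smooth_Phi i k :
  (forall l k', (k' < k)%N -> smooth (@h l k')) ->
  (forall l k', (k' < k)%N -> smooth (@Dbar l k')) ->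
  smooth (Phi h Dbar i k).
Proof.
move=> Hh HD d; apply: Cn_on_submxrow => //; apply: Cn_on_row => //.
exact: smooth_PhiM.
Qed.

End SmoothPhi.

Section Trajectory.
Variables (R : realType) (N r : nat) (m : 'I_N -> nat).
Local Notation M := (\sum_(l < N) m l)%N.
Variable fbar : forall (i : 'I_N) (k : nat), 'M[R]_(k.+2, m i) -> 'rV[R]_(m i).
Variable Delta : forall (i : 'I_N) (k : nat), 'M[R]_(r, M) -> 'rV[R]_(m i).
Variable Dbar : forall (i : 'I_N) (k : nat), 'M[R]_(k.+2, M) -> 'rV[R]_(m i).
Variable h : forall (i : 'I_N) (k : nat), 'M[R]_(k.+2, m i) -> 'rV[R]_(m i).
Variable X : set 'M[R]_(r.+1, M).
Hypothesis oX : open X.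
Hypothesis fbar_smooth : forall i k, (k < r)%N ->
  smooth_on [set firstrows k.+2 (submxrow z i) | z in X] (@fbar i k).
Hypothesis Dbar_smooth : forall i k, (k < r)%N -> smooth (@Dbar i k).
Hypothesis Delta_lower : forall i k, (k < r)%N -> forall z, X z ->
  Delta i k (firstrows r z) =
  @Dbar i k (snoc (firstrows k.+1 z) (lowmask i (row (inord k.+1) z))).
Hypothesis h_smooth : forall i k, (k < r)%N -> smooth (@h i k).
Hypothesis h_inverse : forall i k, (k < r)%N -> forall z, X z ->
  @h i k (snoc (firstrows k.+1 (submxrow z i)) (@fbar i k (firstrows k.+2 (submxrow z i))))
  = row (inord k.+1) (submxrow z i).

(* The right-hand side of the equation of [x_(k+1)], read off the first rows
   [W] of a point of [X] (there [Delta] and its lower-triangular form agree). *)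
Definition field_row s k (W : 'M[R]_(s.+2, M)) : 'rV[R]_M :=
  \mxrow_(i < N) (@fbar i k (firstrows k.+2 (submxrow W i)) +
     @Dbar i k (snoc (firstrows k.+1 W) (lowmask i (row (inord k.+1) W)))).

Definition field s (W : 'M[R]_(s.+2, M)) : 'M[R]_(s.+1, M) :=
  \matrix_(k < s.+1, c < M) field_row k W 0 c.

(* Iterated Lie derivatives of the output [x_1] along [field]:
   [output_deriv s] expresses [y^(s)] through [x_1, ..., x_(s+1)]. *)
Fixpoint output_deriv s : 'M[R]_(s.+1, M) -> 'rV[R]_M :=
  match s return 'M[R]_(s.+1, M) -> 'rV[R]_M with
  | 0 => fun W => row ord0 W
  | s'.+1 => fun W => 'd (@output_deriv s') (firstrows s'.+1 W) (field W)
  end.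

Lemma Cn_on_field s n : (s < r)%N ->
  Cn_on [set firstrows s.+2 z | z in X] n (@field s).
Proof.
move=> sr; have oY : open [set firstrows s.+2 z | z in X] by exact: open_firstrows.
apply: Cn_on_mx => // k c; set i := tagnat.sig1 c.
have kr : (k < r)%N by move: (ltn_ord k); lia.
apply: (eq_Cn_on (g := fun W : 'M[R]_(s.+2, M) =>
  (@fbar i k (firstrows k.+2 (submxrow W i)) +
   @Dbar i k (snoc (firstrows k.+1 W) (lowmask i (row (inord k.+1) W))))
  0 (tagnat.sig2 c))).
  by move=> W; rewrite !mxE.
apply: Cn_on_entry => //; apply: Cn_onD => //.
  pose P (W : 'M[R]_(s.+2, M)) := firstrows k.+2 (submxrow W i).
  apply: (Cn_on_comp_linear_r (P := P) (f := @fbar i k)) => //.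
  - by move=> u v w; apply/matrixP => ? ?; rewrite !mxE.
  - have CP : Cn_on setT 0 P.
      apply: Cn_on_firstrows; first exact: openT.
      by apply: Cn_on_submxrow; [exact: openT|exact: Cn_on_id].
    by move=> W; exact: CP.
  apply: Cn_on_subset (fbar_smooth i kr n) => _ [_ [z Xz <-] <-]; exists z => //.
  by rewrite /P submxrow_firstrows firstrows_firstrows //; move: (ltn_ord k); lia.
apply: (Cn_on_comp oY (fun _ _ => I) (Dbar_smooth i kr n)).
apply: Cn_on_snoc => //; first by apply: Cn_on_firstrows => //; exact: Cn_on_id.
by apply: Cn_on_lowmask => //; apply: Cn_on_row => //; exact: Cn_on_id.
Qed.

Lemma Cn_on_output_deriv s n : (s < r)%N ->
  Cn_on [set firstrows s.+1 z | z in X] n (@output_deriv s).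
Proof.
elim: s n => [|s IH] n sr.
  by apply: Cn_on_row; [exact: open_firstrows|exact: Cn_on_id].
have sr' : (s < r)%N by lia.
apply: (Cn_on_diff_apply (B := [set firstrows s.+1 z | z in X])).
- exact: open_firstrows.
- move=> _ [z Xz <-]; exists z => //.
  by rewrite firstrows_firstrows //; lia.
- exact: IH.
- by apply: Cn_on_firstrows; [exact: open_firstrows|exact: Cn_on_id].
- exact: Cn_on_field.
Qed.

Lemma newrow_upto_state k (w : 'M[R]_(r.+1, M)) (dt : forall l : 'I_N, 'rV[R]_(m l)) :
  (k < r)%N -> X w ->
  (forall l, dt l = @fbar l k (firstrows k.+2 (submxrow w l)) +
                    Delta l k (firstrows r w)) ->
  forall n, newrow_upto h Dbar (firstrows k.+1 w) dt n =
    \mxrow_(l < N) (if (l < n)%N then submxrow (row (inord k.+1) w) l else 0).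
Proof.
move=> kr Xw dtE; elim=> [|n IH]; first by apply/matrixP => i c; rewrite !mxE.
rewrite /= IH; apply: eq_mxrow => l; rewrite mxrowK.
case: (eqVneq (l : nat) n) => [ln|ln]; last first.
  by rewrite ltnS [(l <= n)%N]leq_eqVlt (negbTE ln).
have -> : \mxrow_(l' < N) (if (l' < n)%N then submxrow (row (inord k.+1) w) l' else 0) =
          lowmask l (row (inord k.+1) w) by apply: eq_mxrow => l'; rewrite ln.
rewrite -Delta_lower // dtE addrK submxrow_firstrows h_inverse // ln ltnSn.
by apply/matrixP => i c; rewrite !mxE.
Qed.

Lemma differentiable_Phi l k Y : (k <= r)%N -> differentiable (Phi h Dbar l k) Y.
Proof.
move=> kr; have [dPhi _] : Cn_on setT 1 (Phi h Dbar l k).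
  by apply: smooth_Phi => l' k' k'k; [apply: h_smooth|apply: Dbar_smooth]; lia.
exact: dPhi.
Qed.

Variables (a b : R) (z : R -> 'M[R]_(r.+1, M)).
Hypothesis z_in_X : forall t, a < t < b -> X (z t).
Hypothesis z_derive : forall t, a < t < b -> forall i k, (k < r)%N ->
  is_derive t 1 (fun s => row (inord k) (submxrow (z s) i))
    (@fbar i k (firstrows k.+2 (submxrow (z t) i)) + Delta i k (firstrows r (z t))).
Local Notation y := (fun u => row ord0 (z u)).

Lemma near_itvoo t : a < t < b -> \forall u \near t, a < u < b.
Proof.
move=> tab; have : t \in `]a, b[ by rewrite in_itv.
by move/near_in_itvoo; apply: filterS => u; rewrite in_itv.
Qed.

Lemma derive_traj_entry k c t : (k < r)%N -> a < t < b ->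
  derivable (fun u => z u (inord k) c) t 1 /\
  'D_1 (fun u => z u (inord k) c) t =
  (@fbar (tagnat.sig1 c) k (firstrows k.+2 (submxrow (z t) (tagnat.sig1 c))) +
   Delta (tagnat.sig1 c) k (firstrows r (z t))) 0 (tagnat.sig2 c).
Proof.
move=> kr tab; set i := tagnat.sig1 c.
have -> : (fun u => z u (inord k) c) =
          (fun u => row (inord k) (submxrow (z u) i) 0 (tagnat.sig2 c)).
  by apply: funext => u; rewrite !mxE tagnat.sig2K.
have [dz dzE] := z_derive tab i kr.
split; first by move/derivable_mxP: dz; apply.
by move/matrixP: (derive_mx dz); rewrite dzE => ->; rewrite mxE.
Qed.

Lemma derive_traj_firstrows s t : (s < r)%N -> a < t < b ->
  derivable (fun u => firstrows s.+1 (z u)) t 1 /\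
  'D_1 (fun u => firstrows s.+1 (z u)) t = field (firstrows s.+2 (z t)).
Proof.
move=> sr tab.
have entryE (k : 'I_s.+1) c :
    (fun u => firstrows s.+1 (z u) k c) = (fun u => z u (inord k) c).
  by apply: funext => u; rewrite mxE.
have kr (k : 'I_s.+1) : (k < r)%N by move: (ltn_ord k); lia.
have dz : derivable (fun u => firstrows s.+1 (z u)) t 1.
  by apply/derivable_mxP => k c; rewrite entryE; exact: (derive_traj_entry c (kr k) tab).1.
split=> //; rewrite derive_mx //; apply/matrixP => k c.
rewrite [LHS]mxE entryE (derive_traj_entry c (kr k) tab).2 !mxE.
have kn := ltn_ord k; have Xz := z_in_X tab.
by rewrite Delta_lower // submxrow_firstrows !firstrows_firstrows ?row_firstrows //;
  move: (kr k); lia.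
Qed.

Lemma differentiable_output_traj s t : (s < r)%N -> a < t < b ->
  differentiable (@output_deriv s) (firstrows s.+1 (z t)).
Proof.
move=> sr tab; have [dD _] := Cn_on_output_deriv 1 sr.
by apply: dD; exists (z t) => //; exact: z_in_X.
Qed.

Lemma derive1n_output_traj s t : (s < r)%N -> a < t < b ->
  derive1n s y t = output_deriv (firstrows s.+1 (z t)).
Proof.
elim: s t => [|s IH] t sr tab.
  by apply/rowP => c; rewrite !mxE; congr (z t _ c); apply/val_inj; rewrite /= inordK.
have sr' : (s < r)%N by lia.
have [dz dzE] := derive_traj_firstrows sr' tab.
have dD := differentiable_output_traj sr' tab.
rewrite derive1nS derive1E.
have -> : 'D_1 (derive1n s y) t =
          'D_1 (@output_deriv s \o (fun u => firstrows s.+1 (z u))) t.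
  apply: near_eq_derive; apply: filterS (near_itvoo tab) => u uab.
  by rewrite /= IH.
move/derivable1_diffP: dz => dz.
rewrite deriveE; last exact: differentiable_comp.
rewrite diff_comp // [LHS]/comp -(deriveE (f := fun u => firstrows s.+1 (z u))) // dzE.
by rewrite -[in LHS](@firstrows_firstrows _ _ _ _ s.+1 (z t)) //; lia.
Qed.

Lemma derivable_output_traj s t : (s < r)%N -> a < t < b ->
  derivable (derive1n s y) t 1.
Proof.
move=> sr tab.
have dD := differentiable_output_traj sr tab.
apply: (near_eq_derivable (f := @output_deriv s \o (fun u => firstrows s.+1 (z u)))).
  apply: filterS (near_itvoo tab) => u uab.
  by rewrite /= derive1n_output_traj.
have /derivable1_diffP dz := (derive_traj_firstrows sr tab).1.
exact/derivable1_diffP/differentiable_comp.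
Qed.

Lemma PhiM_traj k t : (k <= r)%N -> a < t < b ->
  PhiM h Dbar (jet y k t) = firstrows k.+1 (z t).
Proof.
elim: k t => [|k IH] t kr tab.
  apply/matrixP => i c; rewrite (ord1 i) !mxE /=.
  by congr (z t _ c); apply/val_inj; rewrite /= inordK.
have kr' : (k < r)%N by lia.
have dy s : (s <= k)%N -> derivable (derive1n s y) t 1.
  by move=> sk; apply: derivable_output_traj => //; lia.
change (snoc (PhiM h Dbar (firstrows k.+1 (jet y k.+1 t)))
  (newrow h Dbar (PhiM h Dbar (k := k)) (jet y k.+1 t)) = firstrows k.+2 (z t)).
rewrite newrowE firstrows_jet IH; [|lia|by []].
rewrite (newrow_upto_state kr' (z_in_X tab)) => [|l].
  rewrite -snoc_firstrows_row; last lia.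
  by congr snoc; rewrite -[RHS]submxrowK; apply: eq_mxrow => l; rewrite ltn_ord.
rewrite -derive_comp_jet //; last exact: (differentiable_Phi l (jet y k t) (ltnW kr')).
have -> : 'D_1 ((fun Z => submxrow (row ord_max (PhiM h Dbar Z)) l) \o jet y k) t =
          'D_1 (fun u => row (inord k) (submxrow (z u) l)) t.
  apply: near_eq_derive; apply: filterS (near_itvoo tab) => u uab.
  by rewrite /= IH //; [apply/matrixP => i c; rewrite !mxE|lia].
by have [_ ->] := z_derive tab l kr'.
Qed.

End Trajectory.

(* Indices are 0-based: level [k < r] is the paper's [k+1].  A point [z] stacks
   [x_1, ..., x_r, u] as rows, and [submxrow z i] is [(x^i_1, ..., x^i_r, u^i)]. *)
Theorem theorem2 (R : realType) (N r : nat) (m : 'I_N -> nat)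
  (fbar : forall (i : 'I_N) (k : nat), 'M[R]_(k.+2, m i) -> 'rV[R]_(m i))
  (Delta : forall (i : 'I_N) (k : nat),
     'M[R]_(r, \sum_(l < N) m l) -> 'rV[R]_(m i))
  (Dbar : forall (i : 'I_N) (k : nat),
     'M[R]_(k.+2, \sum_(l < N) m l) -> 'rV[R]_(m i))
  (h : forall (i : 'I_N) (k : nat), 'M[R]_(k.+2, m i) -> 'rV[R]_(m i))
  (X : set 'M[R]_(r.+1, \sum_(l < N) m l))
  (z0 : 'M[R]_(r.+1, \sum_(l < N) m l)) :
  (0 < r)%N ->
  open X -> X z0 ->
  (forall i k, (k < r)%N ->
     smooth_on [set firstrows k.+2 (submxrow z i) | z in X] (fbar i k)) ->
  (forall i k, (k < r)%N ->
     \det (jacobian (fun w => fbar i k (snoc (firstrows k.+1 (submxrow z0 i)) w))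
                    (row (inord k.+1) (submxrow z0 i))) != 0) ->
  (forall i k, (k < r)%N -> smooth (Delta i k)) ->
  (forall i k, (k < r)%N -> smooth (Dbar i k)) ->
  (forall i k, (k < r)%N -> forall z, X z ->
     Delta i k (firstrows r z) =
     Dbar i k (snoc (firstrows k.+1 z) (lowmask i (row (inord k.+1) z)))) ->
  (forall i k, (k < r)%N -> smooth (h i k)) ->
  (forall i k, (k < r)%N -> forall z, X z ->
     h i k (snoc (firstrows k.+1 (submxrow z i))
                 (fbar i k (firstrows k.+2 (submxrow z i))))
     = row (inord k.+1) (submxrow z i)) ->
  (forall i k, (k <= r)%N -> smooth (Phi h Dbar i k)) /\
  (forall (a b : R) (z : R -> 'M[R]_(r.+1, \sum_(l < N) m l)),
     (forall t, a < t < b -> X (z t)) ->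
     (forall t, a < t < b -> forall i k, (k < r)%N ->
        is_derive t 1 (fun s => row (inord k) (submxrow (z s) i))
          (fbar i k (firstrows k.+2 (submxrow (z t) i))
           + Delta i k (firstrows r (z t)))) ->
     forall t, a < t < b ->
       (forall s, (s < r)%N -> derivable (derive1n s (fun s => row ord0 (z s))) t 1) /\
       (forall i k, (k < r)%N ->
          row (inord k) (submxrow (z t) i)
          = Phi h Dbar i k (jet (fun s => row ord0 (z s)) k t)) /\
       (forall i, row ord_max (submxrow (z t) i)
          = Phi h Dbar i r (jet (fun s => row ord0 (z s)) r t))).
Proof.
move=> _ oX _ fbar_smooth _ _ Dbar_smooth Delta_lower h_smooth h_inverse; split.
  move=> i k kr; apply: smooth_Phi => l k' k'k;
    [apply: h_smooth|apply: Dbar_smooth]; lia.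
move=> a b z z_in_X z_derive t tab.
have PhiM_z := PhiM_traj oX fbar_smooth Dbar_smooth Delta_lower h_smooth h_inverse
  z_in_X z_derive.
split; first by move=> s sr; exact: (derivable_output_traj oX fbar_smooth Dbar_smooth
  Delta_lower z_in_X z_derive).
split=> [i k kr|i].
  by rewrite /Phi PhiM_z ?(ltnW kr) //; apply/matrixP => p q; rewrite !mxE.
rewrite /Phi PhiM_z //; apply/matrixP => p q; rewrite !mxE.
by congr (z t _ _); apply/val_inj; rewrite /= inordK.
Qed.
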